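(* Let $h:[p]\to[m]$ be a random map with $h(j)=h_j\overset{iid}{\sim}\mathrm{Unif}([m])$ for each $j\in[p]$. For $k\in[m]$ let $h^{-1}(k)=\{j\in[p]:h(j)=k\}$ be the (random) preimage set. Let $\mathcal{A}\subset[p]$ with $a=|\mathcal{A}|>1$, and let $j\in[p]$. Then $$\mathbb{E}\Big[\frac{|\mathcal{A}\cap h^{-1}(h_j)\setminus\{j\}|}{|h^{-1}(h_j)|}\Big]=\frac{a-\mathbf{I}\{j\in\mathcal{A}\}}{p-1}\cdot\Big(1-\frac{m}{p}\Big(1-\Big(\frac{m-1}{m}\Big)^p\Big)\Big),$$ and $$\mathbb{E}\Big[\frac{|\mathcal{A}\cap h^{-1}(h_j)\setminus\{j\}|}{|h^{-1}(h_j)|^2}\Big]=m\,\frac{a-\mathbf{I}\{j\in\mathcal{A}\}}{p-1}\cdot\Big(\frac{1}{p-1}-\frac{m+1}{(p-1)^2}+\mathcal{O}(p^{-3})\Big).$$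
   Context: $[k]$ denotes $\{1,\dots,k\}$. $\mathbf{I}\{\cdot\}$ is the indicator function. *)

From HB Require Import structures.
From mathcomp Require Import all_boot all_order all_algebra.
Set Implicit Arguments. Unset Strict Implicit. Unset Printing Implicit Defensive.
Import Order.TTheory GRing.Theory Num.Theory.
Local Open Scope ring_scope.

(* [p] is modelled by 'I_p, [m] by 'I_m (0-based indexing). *)

Definition preim_set (p m : nat) (h : {ffun 'I_p -> 'I_m}) (k : 'I_m)
  : {set 'I_p} := [set i | h i == k].

(* Expectation under h uniformly distributed on all maps [p] -> [m]
   (equivalently h_j iid Unif([m])). *)
Definition Eunif (R : realFieldType) (p m : nat)
  (X : {ffun 'I_p -> 'I_m} -> R) : R :=
  (\sum_(h : {ffun 'I_p -> 'I_m}) X h) / (#|{ffun 'I_p -> 'I_m}|)%:R.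

Definition bucket_ratio (R : realFieldType) (p m : nat) (e : nat) (A : {set 'I_p})
  (j : 'I_p) (h : {ffun 'I_p -> 'I_m}) : R :=
  (#|(A :&: preim_set h (h j)) :\ j|)%:R / ((#|preim_set h (h j)|)%:R ^+ e).

Definition indic (b : bool) : nat := if b then 1%N else 0%N.

From mathcomp Require Import all_boot all_order all_algebra perm.
Set Implicit Arguments. Unset Strict Implicit. Unset Printing Implicit Defensive.
Import Order.TTheory GRing.Theory Num.Theory.
Local Open Scope ring_scope.
From mathcomp Require Import ring lra.

(* By exchangeability of the coordinates of h, every i <> j falls into the bucket
   B of j with the same weight, so the expectation factors as
   (a - I{j in A}) / (p - 1) times E[(|B| - 1) / |B|^e], where |B| - 1 is
   Binomial(p - 1, 1/m).  The identity
   C(n,k) / ((k+1)...(k+r)) = C(n+r,k+r) / ((n+1)...(n+r))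
   turns the sums of C(n,k) (m-1)^(n-k) / ((k+1)...(k+r)) into truncated binomial
   expansions of m^(n+r).  This evaluates E[K/(K+1)] exactly; squeezing
   k/(k+1)^2 between partial-fraction combinations of such terms gives
   E[K/(K+1)^2] up to O(p^-3). *)

Section SubsetSums.
Variables (R : pzSemiRingType) (T : finType).

Lemma sum_card_subsets (B : {set T}) (f : nat -> R) :
  \sum_(S : {set T} | S \subset B) f #|S| = \sum_(k < #|B|.+1) 'C(#|B|, k)%:R * f k.
Proof.
rewrite (partition_big (fun S : {set T} => inord #|S| : 'I_#|B|.+1) predT) //=.
apply: eq_bigr => k _.
have cardS (S : {set T}) : S \subset B -> inord #|S| = k -> #|S| = k.
  by move=> sSB <-; rewrite inordK // ltnS subset_leq_card.
rewrite (eq_bigr (fun _ => f k)) => [|S /andP[sSB /eqP/cardS <-//]].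
rewrite sumr_const -cards_draws mulr_natl; congr (_ *+ _).
apply: eq_card => S; rewrite !inE; apply/andP/andP => -[sSB /eqP Sk]; split=> //.
  by rewrite cardS.
by apply/eqP/val_inj; rewrite /= -Sk inordK // ltnS; apply: subset_leq_card.
Qed.

Lemma sum_card_sets_mem (j : T) (f : nat -> R) :
  \sum_(S : {set T} | j \in S) f #|S|
  = \sum_(k < #|T|.-1.+1) 'C(#|T|.-1, k)%:R * f k.+1.
Proof.
rewrite -(cardsC1 j) -(sum_card_subsets _ (fun k => f k.+1)).
rewrite (reindex_onto (fun S => j |: S) (fun S => S :\ j)) => [|S jS]; last first.
  by rewrite setD1K.
have notin_eq (S : {set T}) : ((j |: S) :\ j == S) = (j \notin S).
  by apply/eqP/idP => [<-|/setU1K//]; rewrite setD11.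
apply: eq_big => [S|S /andP[_]]; first by rewrite setU11 notin_eq subsetC sub1set inE.
by rewrite notin_eq cardsU1 => ->.
Qed.

End SubsetSums.

Section BucketSizes.
Variables (R : pzSemiRingType) (p m : nat).

Lemma card_preim_set_eq (v : 'I_m) (S : {set 'I_p}) :
  #|[set h : {ffun 'I_p -> 'I_m} | preim_set h v == S]| = (m.-1 ^ (p - #|S|))%N.
Proof.
pose F i := if i \in S then pred1 v else predC1 v.
have -> : #|[set h : {ffun 'I_p -> 'I_m} | preim_set h v == S]| = #|family F|.
  apply: eq_card => h; rewrite !inE; apply/eqP/familyP => [hS i|hF].
    by rewrite /F -hS inE; case: eqP => [->|/eqP]; rewrite !inE ?eqxx.
  apply/setP => i; have := hF i; rewrite /F !inE.
  by case: (i \in S); rewrite !inE => /eqP //; case: eqP.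
rewrite card_family foldrE big_image /= (bigID (mem S)) /=.
rewrite big1 => [|i iS]; last by rewrite /F iS card1.
rewrite (eq_bigr (fun=> m.-1)) => [|i /negbTE iS]; last by rewrite /F iS cardC1 card_ord.
rewrite prod_nat_const mul1n; congr (_ ^ _)%N.
have := cardsCs (~: S); rewrite setCK card_ord => <-.
by apply: eq_card => i; rewrite inE.
Qed.

Lemma card_preim_set_perm (s : {perm 'I_p}) (h : {ffun 'I_p -> 'I_m}) v :
  #|preim_set [ffun x => h (s x)] v| = #|preim_set h v|.
Proof.
have -> : preim_set [ffun x => h (s x)] v = s @^-1: preim_set h v.
  by apply/setP => x; rewrite !inE ffunE.
exact/card_preimset/perm_inj.
Qed.

Lemma sum_bucket_size (j : 'I_p) (G : nat -> R) :
  \sum_(h : {ffun 'I_p -> 'I_m}) G #|preim_set h (h j)|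
  = m%:R * \sum_(k < p.-1.+1) ('C(p.-1, k) * m.-1 ^ (p.-1 - k))%:R * G k.+1.
Proof.
rewrite (partition_big (fun h : {ffun 'I_p -> 'I_m} => h j) predT) //=.
rewrite mulr_natl -[X in _ *+ X](card_ord m) -sumr_const.
apply: eq_bigr => v _.
rewrite (eq_bigr (fun h => G #|preim_set h v|)) => [|h /eqP-> //].
rewrite (partition_big (fun h : {ffun 'I_p -> 'I_m} => preim_set h v) (fun S => j \in S))
  => [|h /eqP hj]; last by rewrite inE hj.
rewrite (eq_bigr (fun S : {set 'I_p} => (m.-1 ^ (p - #|S|))%:R * G #|S|)) => [|S jS].
  rewrite (sum_card_sets_mem j (fun k => (m.-1 ^ (p - k))%:R * G k)) card_ord.
  by apply: eq_bigr => k _; rewrite natrM mulrA subnS predn_sub.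
rewrite (eq_big (fun h => preim_set h v == S) (fun=> G #|S|)) => [|h|h /andP[_ /eqP-> //]].
  rewrite sumr_const -(card_preim_set_eq v) mulr_natl.
  by congr (_ *+ _); apply: eq_card => h; rewrite inE.
by rewrite andb_idl // => /eqP hS; move: jS; rewrite -hS inE.
Qed.

End BucketSizes.

Lemma card_setD1_indic (T : finType) (A : {set T}) (j : T) :
  #|A :\ j| = (#|A| - indic (j \in A))%N.
Proof. by rewrite (cardsD1 j A) /indic; case: (j \in A); rewrite ?subn0 ?addKn. Qed.

(* For x = m - 1, [binom_sum n x g / m ^ n] is E[g K] with K ~ Binomial(n, 1/m). *)
Definition binom_sum (R : pzSemiRingType) (n : nat) (x : R) (g : nat -> R) : R :=
  \sum_(k < n.+1) 'C(n, k)%:R * x ^+ (n - k) * g k.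

Section BucketRatio.
Variables (R : realFieldType) (n m e : nat) (j : 'I_n.+1).

Let bucket (h : {ffun 'I_n.+1 -> 'I_m}) := preim_set h (h j).

Lemma sum_bucket_weight_indep (i i' : 'I_n.+1) : i != j -> i' != j ->
  \sum_(h : {ffun 'I_n.+1 -> 'I_m}) (h i == h j)%:R / #|bucket h|%:R ^+ e
  = \sum_(h : {ffun 'I_n.+1 -> 'I_m}) (h i' == h j)%:R / #|bucket h|%:R ^+ e :> R.
Proof.
move=> ij i'j; pose s := tperm i i'.
have sK : involutive (fun h : {ffun 'I_n.+1 -> 'I_m} => [ffun x => h (s x)]).
  by move=> h; apply/ffunP => x; rewrite !ffunE tpermK.
rewrite (reindex_inj (inv_inj sK)) /=; apply: eq_bigr => h _.
have sj : s j = j by rewrite tpermD // eq_sym.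
by rewrite /bucket !ffunE sj tpermL card_preim_set_perm.
Qed.

Lemma card_bucket_setD1 (A : {set 'I_n.+1}) (h : {ffun 'I_n.+1 -> 'I_m}) :
  #|(A :&: bucket h) :\ j|%:R = \sum_(i in A :\ j) (h i == h j)%:R :> R.
Proof.
rewrite -sumr_const big_mkcond [RHS]big_mkcond /=; apply: eq_bigr => i _.
by rewrite !inE; case: (i != j); case: (i \in A); case: (h i == h j).
Qed.

Lemma sum_bucket_ratio (A : {set 'I_n.+1}) (i0 : 'I_n.+1) : i0 != j ->
  \sum_(h : {ffun 'I_n.+1 -> 'I_m}) bucket_ratio R e A j h
  = #|A :\ j|%:R
    * \sum_(h : {ffun 'I_n.+1 -> 'I_m}) (h i0 == h j)%:R / #|bucket h|%:R ^+ e.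
Proof.
move=> i0j; rewrite /bucket_ratio.
under eq_bigr => h _ do rewrite -/(bucket h) card_bucket_setD1 mulr_suml.
rewrite exchange_big /= (eq_bigr (fun=> \sum_(h : {ffun 'I_n.+1 -> 'I_m})
  (h i0 == h j)%:R / #|bucket h|%:R ^+ e)) => [|i]; first by rewrite sumr_const mulr_natl.
by rewrite !inE => /andP[ij _]; apply: sum_bucket_weight_indep.
Qed.

Lemma Eunif_bucket_ratio (A : {set 'I_n.+1}) : (0 < n)%N ->
  Eunif (fun h : {ffun 'I_n.+1 -> 'I_m} => bucket_ratio R e A j h)
  = #|A :\ j|%:R / n%:R
    * (m%:R * binom_sum n (m.-1)%:R (fun k => k%:R / k.+1%:R ^+ e)) / m%:R ^+ n.+1.
Proof.
move=> n_gt0; rewrite /Eunif card_ffun !card_ord natrX.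
have /card_gt0P[i0] : (0 < #|[set~ j]|)%N by rewrite cardsC1 card_ord.
rewrite !inE => i0j.
have sum_all : \sum_(h : {ffun 'I_n.+1 -> 'I_m}) bucket_ratio R e setT j h
    = m%:R * binom_sum n (m.-1)%:R (fun k => k%:R / k.+1%:R ^+ e).
  transitivity (\sum_(h : {ffun 'I_n.+1 -> 'I_m})
                  #|bucket h|.-1%:R / #|bucket h|%:R ^+ e : R).
    apply: eq_bigr => h _; rewrite /bucket_ratio setTI -/(bucket h).
    suff -> : #|bucket h|.-1 = #|bucket h :\ j| by [].
    by rewrite (cardsD1 j) inE eqxx.
  rewrite (sum_bucket_size m j (fun c => c.-1%:R / c%:R ^+ e : R)); congr (_ * _).
  by apply: eq_bigr => k _; rewrite natrM natrX mulrA.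
move: sum_all; rewrite (sum_bucket_ratio setT i0j) (sum_bucket_ratio A i0j).
rewrite setTD cardsC1 card_ord /= => <-.
by rewrite mulrA divfK // pnatr_eq0 -lt0n.
Qed.

End BucketRatio.

Lemma bin_ffact_shift n k r :
  ('C(n, k) * (n + r) ^_ r = 'C(n + r, k + r) * (k + r) ^_ r)%N.
Proof.
elim: r => [|r IHr]; first by rewrite !addn0.
rewrite !addnS !ffactSS mulnCA IHr mulnA.
have := mul_bin_diag (n + r).+1 (k + r); rewrite /= => ->.
by rewrite mulnCA mulnA.
Qed.

Section BinomSums.
Variable R : numFieldType.
Implicit Types (x c : R) (g : nat -> R).

Lemma binom_sum1 n x : binom_sum n x (fun=> 1) = (x + 1) ^+ n.
Proof.
by rewrite exprDn; apply: eq_bigr => k _; rewrite expr1n !mulr1 mulr_natl.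
Qed.

Lemma eq_binom_sum n x g1 g2 : g1 =1 g2 -> binom_sum n x g1 = binom_sum n x g2.
Proof. by move=> eq_g; apply: eq_bigr => k _; rewrite eq_g. Qed.

Lemma binom_sumB n x g1 g2 :
  binom_sum n x (fun k => g1 k - g2 k) = binom_sum n x g1 - binom_sum n x g2.
Proof. by rewrite -sumrB; apply: eq_bigr => k _; rewrite mulrBr. Qed.

Lemma binom_sumZ n x c g :
  binom_sum n x (fun k => c * g k) = c * binom_sum n x g.
Proof. by rewrite mulr_sumr; apply: eq_bigr => k _; rewrite mulrCA. Qed.

Lemma ler_binom_sum n x g1 g2 : 0 <= x -> (forall k, g1 k <= g2 k) ->
  binom_sum n x g1 <= binom_sum n x g2.
Proof.
move=> x0 le_g; apply: ler_sum => k _.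
by apply: ler_wpM2l; [rewrite mulr_ge0 ?exprn_ge0 | apply: le_g].
Qed.

Lemma exprDn_tail n r x :
  \sum_(k < n.+1) 'C(n + r, k + r)%:R * x ^+ (n - k)
  = (x + 1) ^+ (n + r) - \sum_(i < r) 'C(n + r, i)%:R * x ^+ (n + r - i).
Proof.
rewrite exprDn -(big_mkord xpredT (fun i => x ^+ (n + r - i) * 1 ^+ i *+ 'C(n + r, i))).
rewrite (@big_cat_nat _ _ _ r) ?leqW ?leq_addl //= (big_addn 0 _ r) -addSn addnK.
rewrite !big_mkord [X in X + _ - _](eq_bigr (fun i : 'I_r => 'C(n + r, i)%:R * x ^+ (n + r - i)))
  => [|i _]; last by rewrite expr1n mulr1 mulr_natl.
by rewrite addrC addKr; apply: eq_bigr => k _; rewrite expr1n mulr1 mulr_natl subnDr.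
Qed.

Lemma binom_sum_inv_ffact n r x :
  binom_sum n x (fun k => ((k + r) ^_ r)%:R^-1)
  = ((x + 1) ^+ (n + r) - \sum_(i < r) 'C(n + r, i)%:R * x ^+ (n + r - i))
    / ((n + r) ^_ r)%:R.
Proof.
rewrite -exprDn_tail mulr_suml; apply: eq_bigr => k _.
have ffact_neq0 a : ((a + r) ^_ r)%:R != 0 :> R.
  by rewrite pnatr_eq0 -lt0n ffact_gt0 leq_addl.
rewrite mulrAC [RHS]mulrAC; congr (_ * _); apply/eqP.
by rewrite eqr_div // -!natrM bin_ffact_shift.
Qed.

Lemma binom_sum_inv1 n x :
  binom_sum n x (fun k => k.+1%:R^-1) = ((x + 1) ^+ n.+1 - x ^+ n.+1) / n.+1%:R.
Proof.
have := binom_sum_inv_ffact n 1 x; rewrite big_ord1 bin0 subn0 mul1r !addn1 ffactn1 => <-.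
by apply: eq_binom_sum => k; rewrite addn1 ffactn1.
Qed.

Lemma binom_sum_inv2 n x :
  binom_sum n x (fun k => (k.+1 * k.+2)%:R^-1)
  = ((x + 1) ^+ n.+2 - x ^+ n.+2 - n.+2%:R * x ^+ n.+1) / (n.+1 * n.+2)%:R.
Proof.
have := binom_sum_inv_ffact n 2 x; rewrite !big_ord_recl big_ord0 addr0 bin0 subn0 mul1r.
rewrite !addn2 bin1 /= subn1 /= opprD addrA !ffactSS ffactn0 muln1 mulnC => <-.
by apply: eq_binom_sum => k; rewrite addn2 !ffactSS ffactn0 muln1 mulnC.
Qed.

Lemma binom_sum_inv3_le n x : 0 <= x ->
  binom_sum n x (fun k => (k.+1 * k.+2 * k.+3)%:R^-1)
  <= (x + 1) ^+ n.+3 / (n.+1 * n.+2 * n.+3)%:R.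
Proof.
move=> x0; rewrite (@eq_binom_sum _ _ _ (fun k => ((k + 3) ^_ 3)%:R^-1)) => [|k]; last first.
  by rewrite addn3 !ffactSS ffactn0 muln1 mulnC [(k.+2 * _)%N]mulnC.
rewrite binom_sum_inv_ffact addn3 !ffactSS ffactn0 muln1 mulnC [(n.+2 * _)%N]mulnC.
rewrite ler_pM2r ?invr_gt0 ?ltr0n // gerBl.
by apply: sumr_ge0 => i _; rewrite mulr_ge0 ?exprn_ge0.
Qed.

End BinomSums.

Section Moments.
Variable R : realFieldType.

Lemma binom_sum_ratio1 n (x : R) :
  binom_sum n x (fun k => k%:R / k.+1%:R ^+ 1)
  = (x + 1) ^+ n - ((x + 1) ^+ n.+1 - x ^+ n.+1) / n.+1%:R.
Proof.
rewrite -binom_sum1 -binom_sum_inv1 -binom_sumB; apply: eq_binom_sum => k.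
by rewrite expr1 -[k.+1%:R]natr1; field; rewrite natr1 pnatr_eq0.
Qed.

Lemma natr_div_sqS_le k :
  k%:R / k.+1%:R ^+ 2 <= k.+1%:R^-1 - (k.+1 * k.+2)%:R^-1 :> R.
Proof.
have k0 : 0 <= k%:R :> R := ler0n R k.
rewrite natrM -[k.+2%:R]natr1 -[k.+1%:R]natr1 -subr_ge0.
have -> : (k%:R + 1)^-1 - ((k%:R + 1) * (k%:R + 1 + 1))^-1 - k%:R / (k%:R + 1) ^+ 2
    = ((k%:R + 1) ^+ 2 * (k%:R + 2))^-1 :> R.
  by field; lra.
by rewrite invr_ge0 mulr_ge0 ?exprn_ge0 //; lra.
Qed.

Lemma natr_div_sqS_ge k :
  k.+1%:R^-1 - (k.+1 * k.+2)%:R^-1 - 3 * (k.+1 * k.+2 * k.+3)%:R^-1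
  <= k%:R / k.+1%:R ^+ 2 :> R.
Proof.
have k0 : 0 <= k%:R :> R := ler0n R k.
rewrite !natrM -[k.+3%:R]natr1 -[k.+2%:R]natr1 -[k.+1%:R]natr1 -subr_ge0.
have -> : k%:R / (k%:R + 1) ^+ 2 - ((k%:R + 1)^-1 - ((k%:R + 1) * (k%:R + 1 + 1))^-1
      - 3 * ((k%:R + 1) * (k%:R + 1 + 1) * (k%:R + 1 + 1 + 1))^-1)
    = 2 * k%:R / ((k%:R + 1) ^+ 2 * (k%:R + 2) * (k%:R + 3)) :> R.
  by field; lra.
by rewrite divr_ge0 ?mulr_ge0 ?exprn_ge0 //; lra.
Qed.

Lemma binom_sum_ratio2_le n (x : R) : 0 <= x ->
  binom_sum n x (fun k => k%:R / k.+1%:R ^+ 2)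
  <= ((x + 1) ^+ n.+1 - x ^+ n.+1) / n.+1%:R
     - ((x + 1) ^+ n.+2 - x ^+ n.+2 - n.+2%:R * x ^+ n.+1) / (n.+1 * n.+2)%:R.
Proof.
move=> x0; rewrite -binom_sum_inv1 -binom_sum_inv2 -binom_sumB.
exact: ler_binom_sum natr_div_sqS_le.
Qed.

Lemma binom_sum_ratio2_ge n (x : R) : 0 <= x ->
  ((x + 1) ^+ n.+1 - x ^+ n.+1) / n.+1%:R
  - ((x + 1) ^+ n.+2 - x ^+ n.+2 - n.+2%:R * x ^+ n.+1) / (n.+1 * n.+2)%:R
  - 3 * ((x + 1) ^+ n.+3 / (n.+1 * n.+2 * n.+3)%:R)
  <= binom_sum n x (fun k => k%:R / k.+1%:R ^+ 2).
Proof.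
move=> x0; apply: le_trans (ler_binom_sum _ x0 natr_div_sqS_ge).
rewrite !binom_sumB binom_sumZ binom_sum_inv1 binom_sum_inv2 lerB // ler_wpM2l //.
exact: binom_sum_inv3_le.
Qed.

End Moments.

Lemma leading_gap_bounds (R : realFieldType) (N M : R) : 1 <= N -> 0 <= M ->
  0 <= 1 / (N + 1) - M / ((N + 1) * (N + 2)) - 1 / N + (M + 1) / N ^+ 2
    <= 8 * (1 + 3 * M) / (N + 1) ^+ 3.
Proof.
move=> N1 M0.
have -> : 1 / (N + 1) - M / ((N + 1) * (N + 2)) - 1 / N + (M + 1) / N ^+ 2
    = ((N + 2) + M * (3 * N + 2)) / (N ^+ 2 * (N + 1) * (N + 2)).
  field; rewrite ?gt_eqF //; lra.
have den_gt0 : 0 < N ^+ 2 * (N + 1) * (N + 2) by rewrite !mulr_gt0 ?exprn_gt0 //; lra.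
have num_ge0 : 0 <= N + 2 + M * (3 * N + 2) by nra.
apply/andP; split; first exact: divr_ge0 num_ge0 (ltW den_gt0).
rewrite ler_pdivrMr // mulrAC ler_pdivlMr; last by rewrite exprn_gt0 //; lra.
have num_le : N + 2 + M * (3 * N + 2) <= (1 + 3 * M) * (N + 2) by nra.
have cube_le : (N + 1) ^+ 3 <= 4 * N ^+ 2 * (N + 1).
  by rewrite exprSr; apply: ler_wpM2r; rewrite ?expr2; nra.
apply: le_trans (ler_pM num_ge0 _ num_le cube_le) _; first by rewrite exprn_ge0 //; lra.
have : 0 <= (1 + 3 * M) * N ^+ 2 * (N + 1) * (N + 2) by rewrite !mulr_ge0 ?exprn_ge0 //; lra.
nra.
Qed.

(* In the application q = ((M - 1) / M)^(N + 1), and w is the gap between the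
   normalized second moment and its partial-fraction upper bound. *)
Lemma moment2_error_bound (R : realFieldType) (N M q w : R) :
  1 <= N -> 1 <= M -> 0 <= q -> (N + 1) * q <= M - 1 ->
  - (3 * M ^+ 2 / ((N + 1) * (N + 2) * (N + 3))) <= w <= 0 ->
  `|1 / (N + 1) - M / ((N + 1) * (N + 2)) + (M - 1) * q / ((N + 1) * (N + 2)) + w
    - 1 / N + (M + 1) / N ^+ 2|
  <= (8 * (1 + 3 * M) + (M - 1) ^+ 2 + 3 * M ^+ 2) / (N + 1) ^+ 3.
Proof.
move=> N1 M1 q0 qM /andP[w_ge w_le].
have /andP[D0 D1] := leading_gap_bounds N1 (ltW (lt_le_trans ltr01 M1)).
have N10 : 0 < N + 1 by lra.
have cube_gt0 : 0 < (N + 1) ^+ 3 by rewrite exprn_gt0.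
have Y0 : 0 <= (M - 1) * q / ((N + 1) * (N + 2)).
  by rewrite divr_ge0 ?mulr_ge0 //; lra.
have Y1 : (M - 1) * q / ((N + 1) * (N + 2)) <= (M - 1) ^+ 2 / (N + 1) ^+ 3.
  rewrite ler_pdivrMr ?mulr_gt0 //; last lra.
  rewrite mulrAC ler_pdivlMr // !exprS expr0 !mulr1.
  have Mq : (M - 1) * ((N + 1) * q) <= (M - 1) * (M - 1) by rewrite ler_wpM2l //; lra.
  have := ler_wpM2r (mulr_ge0 (ltW N10) (ltW N10)) Mq.
  have : (M - 1) * (M - 1) * ((N + 1) * (N + 1)) <= (M - 1) * (M - 1) * ((N + 1) * (N + 2)).
    by apply: ler_wpM2l; nra.
  lra.
have V1 : 3 * M ^+ 2 / ((N + 1) * (N + 2) * (N + 3)) <= 3 * M ^+ 2 / (N + 1) ^+ 3.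
  rewrite ler_pdivrMr ?mulr_gt0 //; try lra.
  rewrite mulrAC ler_pdivlMr // !exprS expr0 !mulr1.
  have : 0 <= 3 * (M * M) by nra.
  nra.
rewrite [in leRHS]mulrDl [in leRHS]mulrDl ler_norml.
set D := _ + (M + 1) / N ^+ 2 in D0 D1.
set Y := (M - 1) * q / _ in Y0 Y1.
have -> : 1 / (N + 1) - M / ((N + 1) * (N + 2)) + Y + w - 1 / N + (M + 1) / N ^+ 2
    = D + Y + w by rewrite /D; ring.
lra.
Qed.

Lemma natr_mul_expr_le (R : realFieldType) (x : R) n : 0 <= x ->
  n%:R * x ^+ n <= x * (x + 1) ^+ n.
Proof.
move=> x0; elim: n => [|n IHn]; first by rewrite mul0r mulr_ge0 ?exprn_ge0 ?addr_ge0.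
have le_pow : x ^+ n <= (x + 1) ^+ n by rewrite lerXn2r ?nnegrE ?addr_ge0 //; lra.
rewrite -natr1 mulrDl mul1r !exprS.
have := ler_wpM2l x0 IHn; have := ler_wpM2l x0 le_pow; nra.
Qed.

Lemma binom_sum_ratio2_error (R : realFieldType) n (M : R) : (0 < n)%N -> 1 <= M ->
  `|binom_sum n (M - 1) (fun k => k%:R / k.+1%:R ^+ 2) / M ^+ n.+1
    - 1 / n%:R + (M + 1) / n%:R ^+ 2|
  <= (8 * (1 + 3 * M) + (M - 1) ^+ 2 + 3 * M ^+ 2) / n.+1%:R ^+ 3.
Proof.
move=> n_gt0 M1; set x := M - 1; have x0 : 0 <= x by rewrite subr_ge0.
have up := binom_sum_ratio2_le n x0; have lo := binom_sum_ratio2_ge n x0.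
rewrite subrK in up lo.
set S := binom_sum _ _ _ in up lo *; set N := n%:R.
have N1 : 1 <= N by rewrite ler1n.
have [eN1 eN2 eN3] : [/\ n.+1%:R = N + 1, n.+2%:R = N + 2 & n.+3%:R = N + 3 :> R].
  by split; rewrite ?natr1 // -natrD ?addn2 ?addn3.
rewrite !natrM eN1 eN2 eN3 in up lo *.
have M_gt0 : 0 < M by lra.
have Mn_gt0 : 0 < M ^+ n.+1 by rewrite exprn_gt0.
set q := x ^+ n.+1 / M ^+ n.+1.
have q0 : 0 <= q by rewrite divr_ge0 ?exprn_ge0 // ltW.
have qx : (N + 1) * q <= x.
  by rewrite mulrA ler_pdivrMr // -eN1; have := natr_mul_expr_le n.+1 x0; rewrite /x subrK.
set u := 1 / (N + 1) - M / ((N + 1) * (N + 2)) + x * q / ((N + 1) * (N + 2)).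
have [M0 N1n N2n N3n] : [/\ M != 0, N + 1 != 0, N + 2 != 0 & N + 3 != 0].
  by split; rewrite gt_eqF //; lra.
have u_eq : ((M ^+ n.+1 - x ^+ n.+1) / (N + 1)
    - (M ^+ n.+2 - x ^+ n.+2 - (N + 2) * x ^+ n.+1) / ((N + 1) * (N + 2))) / M ^+ n.+1 = u.
  by rewrite /u /q /x !exprS; field; rewrite -/N N1n N2n M0 expf_neq0.
have V_eq : 3 * (M ^+ n.+3 / ((N + 1) * (N + 2) * (N + 3))) / M ^+ n.+1
    = 3 * M ^+ 2 / ((N + 1) * (N + 2) * (N + 3)).
  by rewrite !exprS; field; rewrite -/N N1n N2n N3n M0 expf_neq0.
have -> : S / M ^+ n.+1 = u + (S / M ^+ n.+1 - u) by rewrite addrC subrK.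
apply: moment2_error_bound => //.
have Mn_inv_ge0 : 0 <= (M ^+ n.+1)^-1 by rewrite invr_ge0 ltW.
have := ler_wpM2r Mn_inv_ge0 up; have := ler_wpM2r Mn_inv_ge0 lo.
rewrite mulrBl u_eq V_eq => lo' up'; apply/andP; split; lra.
Qed.

Theorem lemma4 (R : realFieldType) :
  (forall (p m : nat) (A : {set 'I_p}) (j : 'I_p),
     (0 < m)%N -> (1 < #|A|)%N ->
     Eunif (fun h : {ffun 'I_p -> 'I_m} => bucket_ratio R 1 A j h)
     = ((#|A| - indic (j \in A))%N%:R / (p.-1)%:R)
       * (1 - (m%:R / p%:R) * (1 - ((m.-1)%:R / m%:R) ^+ p)))
  /\
  (forall m : nat, (0 < m)%N ->
     exists C : R, exists P0 : nat, forall p : nat, (P0 <= p)%N ->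
     forall (A : {set 'I_p}) (j : 'I_p), (1 < #|A|)%N ->
       exists err : R, `|err| <= C / p%:R ^+ 3 /\
       Eunif (fun h : {ffun 'I_p -> 'I_m} => bucket_ratio R 2 A j h)
       = m%:R * ((#|A| - indic (j \in A))%N%:R / (p.-1)%:R)
         * (1 / (p.-1)%:R - (m.+1)%:R / ((p.-1)%:R ^+ 2) + err)).
Proof.
have pos_of_card_gt1 n (A : {set 'I_n.+1}) : (1 < #|A|)%N -> (0 < n)%N.
  by move=> A_gt1; rewrite -ltnS -[n.+1]card_ord (leq_trans A_gt1 (max_card A)).
split=> [[|n] m A j m_gt0 A_gt1|m m_gt0]; first by case: j.
  have n_gt0 := pos_of_card_gt1 _ _ A_gt1.
  rewrite Eunif_bucket_ratio // -card_setD1_indic binom_sum_ratio1.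
  rewrite natr1 prednK // expr_div_n /= !exprS.
  have m_neq0 : m%:R != 0 :> R by rewrite pnatr_eq0 -lt0n.
  by field; rewrite expf_neq0 // m_neq0 addrC natr1 !pnatr_eq0 /= -lt0n n_gt0.
exists (8 * (1 + 3 * m%:R) + (m%:R - 1) ^+ 2 + 3 * m%:R ^+ 2), 2%N.
move=> [|n] _ A j A_gt1; first by case: j.
have n_gt0 := pos_of_card_gt1 _ _ A_gt1.
have M1 : 1 <= m%:R :> R by rewrite ler1n.
have x_eq : (m.-1)%:R = m%:R - 1 :> R by rewrite -[in RHS](prednK m_gt0) -natr1 addrK.
pose S : R := binom_sum n (m.-1)%:R (fun k => k%:R / k.+1%:R ^+ 2).
exists (S / m%:R ^+ n.+1 - 1 / n%:R + (m%:R + 1) / n%:R ^+ 2); split.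
  by rewrite /S x_eq; apply: binom_sum_ratio2_error.
rewrite Eunif_bucket_ratio // -card_setD1_indic -/S /= -natr1.
by field; rewrite expf_neq0 !pnatr_eq0 -!lt0n ?n_gt0.
Qed.
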